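(* If $G$ is a bipartite finite simple graph of order $n$ with at least one edge, then $\mathrm{es}_{\Delta}(G)\leq n/2$.
   Context: $\mathrm{es}_{\Delta}(G)$ is the minimum number of edges of $G$ whose removal results in a subgraph with maximum degree $\Delta(G)-1$. *)

From mathcomp Require Import all_boot.
Set Implicit Arguments. Unset Strict Implicit. Unset Printing Implicit Defensive.

Section Graphs.
Variable T : finType.

Definition simple_graph (e : rel T) : Prop := irreflexive e /\ symmetric e.

Definition bipartite (e : rel T) : Prop :=
  exists A : {set T}, forall x y, e x y -> (x \in A) != (y \in A).

Definition edges (e : rel T) : {set {set T}} :=
  [set [set x; y] | x in T, y in T & e x y].

Definition remove_edges (e : rel T) (F : {set {set T}}) : rel T :=
  fun x y => e x y && ([set x; y] \notin F).

Definition deg (e : rel T) (x : T) : nat := #|[set y | e x y]|.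

Definition maxdeg (e : rel T) : nat := \max_(x : T) deg e x.

(* es_Delta(G): minimum number of edges whose removal yields max degree Delta(G)-1.
   (Default value #|edges e| is irrelevant whenever such a set exists.) *)
Definition es_Delta (e : rel T) : nat :=
  \big[minn/#|edges e|]_(F in powerset (edges e)
     | maxdeg (remove_edges e F) == (maxdeg e).-1) #|F|.

End Graphs.

From mathcomp Require Import all_boot order perm zify.
Set Implicit Arguments. Unset Strict Implicit. Unset Printing Implicit Defensive.

(* König's theorem gives a proper edge colouring of a bipartite graph with Delta colours: an
   edge uv is added to a colouring of G - uv by choosing colours a, b missing at u and v and
   swapping a and b along the a/b-alternating path from v.  That path cannot end at u: it
   enters u's side of the bipartition only along edges coloured a, and a is missing at u.
   A vertex of degree Delta sees all Delta colours, so a single colour class M is a matching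
   that meets every vertex of maximum degree.  Deleting M lowers each of them to Delta - 1 and
   leaves all other vertices below Delta, hence es_Delta(G) <= |M| <= n/2. *)

Lemma set2_injr (T : finType) (x y z : T) : [set x; y] = [set x; z] -> y = z.
Proof.
move=> xy_xz; have /set2P[y_x | //] : y \in [set x; z] by rewrite -xy_xz set22.
have /set2P[z_x | //] : z \in [set x; y] by rewrite xy_xz set22.
by rewrite y_x z_x.
Qed.

Lemma connect_last (T : finType) (r : rel T) x y :
  connect r x y -> y != x -> exists2 z, connect r x z & r z y.
Proof.
case/connectP => p; case/lastP: p => [_ -> | p z]; first by rewrite eqxx.
rewrite rcons_path last_rcons => /andP[x_p p_z] -> _.
by exists (last x p) => //; apply/connectP; exists p.
Qed.

Section Edges.
Variables (T : finType) (e : rel T).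
Implicit Types (F : {set {set T}}) (x y : T).

Lemma edgesP f : reflect (exists x y, e x y /\ f = [set x; y]) (f \in edges e).
Proof.
apply: (iffP imset2P) => [[x y _] | [x [y [exy ->]]]].
  by rewrite inE => exy ->; exists x, y.
by exists x y; rewrite ?inE.
Qed.

Lemma edge_in_edges x y : e x y -> [set x; y] \in edges e.
Proof. by move=> exy; apply/edgesP; exists x, y. Qed.

Lemma edge_rotate x y z :
  symmetric e -> e x y -> z \in [set x; y] -> exists2 w, e z w & [set x; y] = [set z; w].
Proof. by move=> e_sym exy /set2P[->|->]; [exists y | exists x; rewrite 1?e_sym 1?setUC]. Qed.

End Edges.

Section RemoveEdges.
Variables (T : finType) (e : rel T).
Implicit Types (F : {set {set T}}) (x y : T).

Lemma edges_remove_edges F : edges (remove_edges e F) = edges e :\: F.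
Proof.
apply/setP => f; rewrite in_setD andbC.
apply/edgesP/andP => [[x [y [/andP[exy xyF] ->]]] | [/edgesP[x [y [exy ->]]] xyF]].
  by rewrite edge_in_edges.
by exists x, y; rewrite /remove_edges exy xyF.
Qed.

Lemma remove_edges_sym F : symmetric e -> symmetric (remove_edges e F).
Proof. by move=> e_sym x y; rewrite /remove_edges e_sym setUC. Qed.

Definition deg_in F x := #|[set y | e x y & [set x; y] \in F]|.

Lemma deg_remove_edges F x : deg_in F x + deg (remove_edges e F) x = deg e x.
Proof.
rewrite /deg_in /deg -(cardsID [set y | [set x; y] \in F] [set y | e x y]).
by congr (_ + _); apply: eq_card => y; rewrite !inE // andbC.
Qed.

Lemma deg_remove_edges_lt F x y :
  e x y -> [set x; y] \in F -> deg (remove_edges e F) x < deg e x.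
Proof.
move=> exy xyF; rewrite -(deg_remove_edges F x) -add1n leq_add2r.
by apply/card_gt0P; exists y; rewrite inE exy.
Qed.

Lemma maxdeg_remove_edges F x0 :
  (forall x, deg e x = maxdeg e -> deg_in F x = 1) ->
  maxdeg (remove_edges e F) = (maxdeg e).-1.
Proof.
move=> F_max; have deg_le x : deg e x <= maxdeg e := leq_bigmax x.
have [xm deg_xm] : {xm | maxdeg e = deg e xm}.
  by rewrite /maxdeg; apply: (@eq_bigmax T (deg e)); apply/card_gt0P; exists x0.
have deg_rem x : deg (remove_edges e F) x = deg e x - deg_in F x.
  by rewrite -(deg_remove_edges F x) addKn.
apply/eqP; rewrite eqn_leq; apply/andP; split.
  apply/bigmax_leqP => x _; rewrite deg_rem.
  have [/[dup] deg_x /F_max -> | deg_x] := eqVneq (deg e x) (maxdeg e).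
    by rewrite deg_x subn1.
  by move: (deg_le x) deg_x (leq_subr (deg_in F x) (deg e x)); lia.
by apply: leq_trans (leq_bigmax xm); rewrite deg_rem F_max // deg_xm subn1.
Qed.

Lemma es_Delta_le F :
  F \subset edges e -> maxdeg (remove_edges e F) = (maxdeg e).-1 -> es_Delta e <= #|F|.
Proof.
move=> F_edges F_Delta; apply: (@Order.TotalTheory.bigmin_le_cond _ nat).
by rewrite powersetE F_edges F_Delta eqxx.
Qed.

End RemoveEdges.

Section EdgeColourings.
Variables (T : finType) (D : nat).
Implicit Types (e : rel T) (col : {set T} -> 'I_D) (a c : 'I_D) (x y : T).

Definition proper_edge_colouring e col :=
  forall x y z, e x y -> e x z -> y != z -> col [set x; y] != col [set x; z].

Definition colours_at e col x := [set col [set x; y] | y in [set y | e x y]].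

Definition colour_class e col c := [set f in edges e | col f == c].

Lemma card_colours_at e col x :
  proper_edge_colouring e col -> #|colours_at e col x| = deg e x.
Proof.
move=> col_proper; apply: card_in_imset => y z; rewrite !inE => exy exz.
exact: contra_eq (col_proper x y z exy exz).
Qed.

Lemma free_colour e col x :
  proper_edge_colouring e col -> deg e x < D ->
  exists a, forall y, e x y -> col [set x; y] != a.
Proof.
move=> col_proper deg_x.
have /card_gt0P[a] : 0 < #|~: colours_at e col x|.
  by move: (cardsC (colours_at e col x)); rewrite card_ord card_colours_at //; lia.
rewrite inE => a_free; exists a => y exy.
by apply: contraNneq a_free => <-; apply: imset_f; rewrite inE.
Qed.

Lemma colours_at_full e col x a :
  proper_edge_colouring e col -> deg e x = D -> a \in colours_at e col x.
Proof.
move=> col_proper deg_x; suff -> : colours_at e col x = setT by rewrite inE.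
apply/eqP; rewrite eqEcard subsetT /= cardsT card_ord.
by rewrite (card_colours_at x col_proper) deg_x.
Qed.

Lemma card_colour_class_at e col c x :
  proper_edge_colouring e col ->
  deg_in e (colour_class e col c) x = (c \in colours_at e col x).
Proof.
move=> col_proper; rewrite /deg_in.
have -> : [set y | e x y & [set x; y] \in colour_class e col c]
          = [set y | e x y & col [set x; y] == c].
  by apply/setP => y; rewrite !inE; case exy: (e x y); rewrite // edge_in_edges.
case: (boolP (c \in colours_at e col x)) => [/imsetP[y0] | c_out].
  rewrite inE => exy0 c_y0; suff -> : [set y | e x y & col [set x; y] == c] = [set y0].
    by rewrite cards1.
  apply/setP => y; rewrite !inE c_y0; apply/andP/eqP => [[exy /eqP col_y] | ->].
    exact: contra_eq (col_proper x y y0 exy exy0) col_y.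
  by rewrite exy0 eqxx.
apply/eqP; rewrite cards_eq0; apply/eqP/setP => y; rewrite !inE.
by apply: contraNF c_out => /andP[exy /eqP <-]; apply: imset_f; rewrite inE.
Qed.

Lemma card_colour_class e col c :
  simple_graph e -> proper_edge_colouring e col -> (#|colour_class e col c|).*2 <= #|T|.
Proof.
move=> [e_irr e_sym] col_proper.
have pair_class : {in colour_class e col c, forall f : {set T}, #|f| = 2}.
  move=> f; rewrite inE => /andP[/edgesP[x [y [exy ->]]] _].
  by rewrite cards2; case: eqVneq exy => // ->; rewrite e_irr.
have /eqP : trivIset (colour_class e col c).
  apply/trivIsetP => f g; rewrite !inE.
  move=> /andP[/edgesP[x1 [y1 [e1 Ef]]] /eqP col_f].
  move=> /andP[/edgesP[x2 [y2 [e2 Eg]]] /eqP col_g] fg.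
  rewrite -setI_eq0; apply: contraT => /set0Pn[z]; rewrite inE Ef Eg => /andP[z_f z_g].
  have [w1 ezw1 Ef'] := edge_rotate e_sym e1 z_f.
  have [w2 ezw2 Eg'] := edge_rotate e_sym e2 z_g.
  have [w12 | w12] := eqVneq w1 w2; first by move: fg; rewrite Ef Eg Ef' Eg' w12 eqxx.
  by move: (col_proper z w1 w2 ezw1 ezw2 w12); rewrite -Ef' -Eg' -Ef -Eg col_f col_g eqxx.
rewrite (eq_bigr (fun _ => 2)) // sum_nat_const muln2 => ->.
exact: max_card.
Qed.

Section KempeChain.
Variables (A : {set T}) (e : rel T) (col : {set T} -> 'I_D).
Hypothesis e_sym : symmetric e.
Hypothesis e_cross : forall x y, e x y -> (x \in A) != (y \in A).
Hypothesis col_proper : proper_edge_colouring e col.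
Variables (u v : T) (a b : 'I_D).
Hypothesis uv_cross : (u \in A) != (v \in A).
Hypothesis a_free_u : forall y, e u y -> col [set u; y] != a.
Hypothesis b_free_v : forall y, e v y -> col [set v; y] != b.

Let side x := (x \in A) == (v \in A).
(* The a/b-alternating path from v, oriented away from v: it leaves vertices on v's side along
   colour a and the others along colour b. *)
Let chain := [rel x y | e x y && (col [set x; y] == if side x then a else b)].
Let C := [set w | connect chain v w].

Let side_cross x y : e x y -> side x = ~~ side y.
Proof. by move/e_cross; rewrite /side; case: (x \in A); case: (y \in A); case: (v \in A). Qed.

Let chain_last w : w \in C -> w != v -> exists2 w', w' \in C & chain w' w.
Proof. by rewrite inE => /connect_last vw /vw[w' vw' w'w]; exists w'; rewrite ?inE. Qed.

Let u_notin_chain : u \notin C.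
Proof.
apply/negP => uC; have uv : u != v by apply: contraNneq uv_cross => ->.
have [w _ /andP[ewu]] := chain_last uC uv.
have side_u : side u = false by rewrite /side; apply/negbTE.
rewrite (side_cross ewu) side_u /= => /eqP col_wu.
by have := @a_free_u w; rewrite e_sym ewu setUC col_wu eqxx => /(_ isT).
Qed.

Let chain_closed x y : x \in C -> e x y -> col [set x; y] \in [set a; b] -> y \in C.
Proof.
move=> xC exy col_ab.
have [fwd | bwd] := eqVneq (col [set x; y]) (if side x then a else b).
  move: xC; rewrite !inE => /connect_trans; apply.
  by apply: connect1; rewrite /= exy fwd eqxx.
have col_bwd : col [set x; y] = if side x then b else a.
  by move: col_ab bwd; rewrite in_set2; case: (side x) => /orP[] /eqP ->; rewrite ?eqxx.
have xv : x != v.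
  apply/eqP => x_v; move: (@b_free_v y).
  by rewrite -x_v exy col_bwd /side x_v !eqxx => /(_ isT).
have [w wC /andP[ewx /eqP col_wx]] := chain_last xC xv.
have exw : e x w by rewrite e_sym.
have [-> // | yw] := eqVneq y w.
move: (col_proper exy exw yw).
by rewrite [[set x; w]]setUC col_wx (side_cross ewx) col_bwd; case: (side x); rewrite eqxx.
Qed.

Lemma kempe_swap : exists col' : {set T} -> 'I_D,
  [/\ proper_edge_colouring e col', forall y, e u y -> col' [set u; y] != a
    & forall y, e v y -> col' [set v; y] != a].
Proof.
pose col' (f : {set T}) := if f \subset C then tperm a b (col f) else col f.
have col'_in x y : x \in C -> e x y -> col' [set x; y] = tperm a b (col [set x; y]).
  move=> xC exy; rewrite /col' subUset !sub1set xC /=; case: ifP => // yC.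
  by rewrite tpermD //; apply: contraFneq yC => col_xy;
    apply: chain_closed xC exy _; rewrite -col_xy ?set21 ?set22.
have col'_out x y : x \notin C -> col' [set x; y] = col [set x; y].
  by move=> xC; rewrite /col' subUset !sub1set (negbTE xC).
exists col'; split.
- move=> x y z exy exz yz; case: (boolP (x \in C)) => xC.
    rewrite !col'_in //; apply: contra (col_proper exy exz yz) => /eqP/perm_inj->.
    exact: eqxx.
  by rewrite !col'_out //; apply: col_proper.
- by move=> y euy; rewrite col'_out ?u_notin_chain ?a_free_u.
- move=> y evy; rewrite col'_in ?inE ?connect0 //.
  by rewrite -[X in _ != X](tpermR a b) (inj_eq perm_inj) b_free_v.
Qed.

End KempeChain.

Lemma bipartite_edge_colouring e :
  0 < D -> symmetric e -> bipartite e -> (forall x, deg e x <= D) ->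
  exists col, proper_edge_colouring e col.
Proof.
move=> D_gt0 e_sym [A e_cross].
have [n] := ubnP #|edges e|; elim: n e e_sym e_cross => // n IH e e_sym e_cross.
rewrite ltnS => edges_le deg_le.
case: (pickP [pred p : T * T | e p.1 p.2]) => [[u v] /= euv | no_edge]; last first.
  by exists (fun=> Ordinal D_gt0) => x y z exy; have := no_edge (x, y); rewrite /= exy.
pose e' := remove_edges e [set [set u; v]].
have e'_le x y : e' x y -> e x y by case/andP.
have e'_edge x y : e x y -> [set x; y] != [set u; v] -> e' x y.
  by move=> exy xy_uv; rewrite /e' /remove_edges exy in_set1 xy_uv.
have [col col_proper] : exists col, proper_edge_colouring e' col.
  apply: IH => [|x y /e'_le /e_cross // | | x].
  - exact: remove_edges_sym.
  - rewrite edges_remove_edges; apply: leq_trans edges_le.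
    by rewrite [X in _ < X](cardsD1 [set u; v]) edge_in_edges.
  - apply: leq_trans (deg_le x).
    by rewrite -(deg_remove_edges e [set [set u; v]] x) leq_addl.
have deg_e'_lt x y : e x y -> [set x; y] = [set u; v] -> deg e' x < D.
  move=> exy xy_uv; apply: leq_trans (deg_le x).
  by apply: deg_remove_edges_lt exy _; rewrite xy_uv set11.
have [a a_free_u] := free_colour col_proper (deg_e'_lt u v euv erefl).
have evu : e v u by rewrite e_sym.
have [b b_free_v] := free_colour col_proper (deg_e'_lt v u evu (setUC _ _)).
have [col2 [col2_proper a_free2_u a_free2_v]] :=
  kempe_swap (remove_edges_sym _ e_sym) (fun x y exy => e_cross _ _ (e'_le _ _ exy))
    col_proper (e_cross _ _ euv) a_free_u b_free_v.
have a_free2 x : x \in [set u; v] -> forall z, e' x z -> col2 [set x; z] != a.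
  by case/set2P => ->.
exists (fun f => if f == [set u; v] then a else col2 f) => x y z exy exz yz /=.
have [xy_uv | xy_uv] := eqVneq [set x; y] [set u; v];
  have [xz_uv | xz_uv] := eqVneq [set x; z] [set u; v].
- by move: yz; rewrite (set2_injr (etrans xy_uv (esym xz_uv))) eqxx.
- by rewrite eq_sym a_free2 ?e'_edge // -xy_uv set21.
- by rewrite a_free2 ?e'_edge // -xz_uv set21.
- exact: col2_proper _ _ _ (e'_edge _ _ exy xy_uv) (e'_edge _ _ exz xz_uv) yz.
Qed.

End EdgeColourings.

Theorem corollary5p1 (T : finType) (e : rel T) :
  simple_graph e -> bipartite e -> (exists x y, e x y) ->
  (es_Delta e).*2 <= #|T|.
Proof.
move=> e_simple e_bip [x0 [y0 ex0y0]]; have [_ e_sym] := e_simple.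
have deg_le x : deg e x <= maxdeg e := leq_bigmax x.
have Delta_gt0 : 0 < maxdeg e.
  by apply: leq_trans (deg_le x0); apply/card_gt0P; exists y0; rewrite inE.
have [col col_proper] := bipartite_edge_colouring Delta_gt0 e_sym e_bip deg_le.
apply: leq_trans (card_colour_class (Ordinal Delta_gt0) e_simple col_proper).
rewrite leq_double.
apply: es_Delta_le; first by apply/subsetP => f; rewrite inE => /andP[].
apply: (maxdeg_remove_edges x0) => x deg_x.
by rewrite card_colour_class_at // colours_at_full.
Qed.
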